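(* Let $\mathcal{I}$ be an ideal on $\mathbf{N}$, $N=c_0(\mathcal{I})\cap\ell_\infty$, and $\nu:\mathcal{P}(\mathbf{N})\to\mathbf{R}$ an $\mathcal{I}$-invariant normalized capacity. Then the functional $V:\ell_\infty\to\mathbf{R}$, $V(x)=\int_{\mathbf{N}}x\,\mathrm{d}\nu$ (Choquet integral), is $N$-invariant: $V(x)=V(y)$ whenever $x,y\in\ell_\infty$ and $x-y\in N$.
   Context: An ideal on $\mathbf{N}$ is a family of subsets closed under subsets and finite unions, not containing $\mathbf{N}$, and containing all finite sets. $c_0(\mathcal{I})$ is the set of real sequences $x$ with $\{n:|x_n|\ge\varepsilon\}\in\mathcal{I}$ for all $\varepsilon>0$; $\ell_\infty$ is the space of bounded real sequences. A normalized capacity on $\mathcal{P}(\mathbf{N})$ is monotone with $\nu(\emptyset)=0$, $\nu(\mathbf{N})=1$; it is $\mathcal{I}$-invariant if $\nu(A)=\nu(B)$ whenever $A\triangle B\in\mathcal{I}$. Choquet integral: $\int x\,\mathrm{d}\nu=\int_0^\infty\nu(\{n:x_n\ge t\})\,\mathrm{d}t+\int_{-\infty}^0[\nu(\{n:x_n\ge t\})-1]\,\mathrm{d}t$. *)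

From HB Require Import structures.
From mathcomp Require Import all_boot all_order all_algebra.
From mathcomp Require Import all_classical all_reals all_analysis.
Set Implicit Arguments. Unset Strict Implicit. Unset Printing Implicit Defensive.
Import Order.TTheory GRing.Theory Num.Theory.
Local Open Scope classical_set_scope.
Local Open Scope ring_scope.

Definition is_ideal (I : set (set nat)) : Prop :=
  (forall A B, B `<=` A -> I A -> I B) /\
  (forall A B, I A -> I B -> I (A `|` B)) /\
  ~ I setT /\
  (forall A, finite_set A -> I A).

Definition symdiff (A B : set nat) : set nat := (A `\` B) `|` (B `\` A).

Definition c0_ideal {R : realType} (I : set (set nat)) (x : nat -> R) : Prop :=
  forall eps : R, 0 < eps -> I [set n | eps <= `|x n|].

Definition bounded_seq {R : realType} (x : nat -> R) : Prop :=
  exists M : R, forall n, `|x n| <= M.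

Definition normalized_capacity {R : realType} (nu : set nat -> R) : Prop :=
  (forall A B, A `<=` B -> nu A <= nu B) /\ nu set0 = 0 /\ nu setT = 1.

Definition ideal_invariant {R : realType} (I : set (set nat)) (nu : set nat -> R) : Prop :=
  forall A B, I (symdiff A B) -> nu A = nu B.

Definition choquet_ext {R : realType} (nu : set nat -> R) (x : nat -> R) : \bar R :=
  ((\int[lebesgue_measure]_(t in `[0%R, +oo[%classic) (nu [set n | t <= x n])%:E)
   + (\int[lebesgue_measure]_(t in `]-oo, 0%R[%classic) (nu [set n | t <= x n] - 1)%:E))%E.

(* The real-valued functional V (finite for bounded x). *)
Definition choquet {R : realType} (nu : set nat -> R) (x : nat -> R) : R :=
  fine (choquet_ext nu x).

From HB Require Import structures.
From mathcomp Require Import all_boot all_order all_algebra.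
From mathcomp Require Import all_classical all_reals all_analysis.
From mathcomp Require Import lra measurable_realfun.
Import Order.TTheory GRing.Theory Num.Theory.
Local Open Scope classical_set_scope.
Local Open Scope ring_scope.

(* The Choquet integral of x only depends on the "level
   function" t |-> nu {n | t <= x n}, and only up to a Lebesgue-null set.
   If x - y is in c_0(I), then for s < t the set where x n >= t but
   y n < s lies in {n | t - s <= |x n - y n|}, which belongs to I; by
   I-invariance and monotonicity of nu the level functions of x and y
   therefore interleave: level x t <= level y s and level y t <= level x s.
   Two real functions interleaving in this way can only disagree on a
   countable set: a rational chosen strictly between F t and G t at each
   point of disagreement determines that point.  Countable sets are
   Lebesgue-null, so both integrals defining the Choquet integral coincide. *)

Definition shift_below {R : realType} (G F : R -> R) : Prop :=
  forall s t, s < t -> G t <= F s.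

(* If G is shift-below F, then F < G only at countably many points: pick a
   rational strictly between F t and G t; distinct points give distinct
   rationals, since the intervals (F t, G t) are pairwise disjoint. *)
Lemma countable_shift_gap {R : realType} {F G : R -> R} :
  shift_below G F -> countable [set t | F t < G t].
Proof.
move=> GF.
have /choice [q q_between] : forall t, exists q : rat,
    F t < G t -> F t < ratr q < G t.
  move=> t; case: (boolP (F t < G t)) => [FGt|_]; last by exists 0.
  by have [q] := rat_in_itvoo FGt; rewrite in_itv /= => hq; exists q.
apply/countable_injP; exists (fun t => pickle (q t)).
have disjoint_gaps a b : F a < G a -> F b < G b -> a < b -> q a != q b.
  move=> Ga Gb ab; apply/eqP => qab.
  have /andP[Fa_q _] := q_between a Ga; have /andP[_ q_Gb] := q_between b Gb.
  rewrite qab in Fa_q.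
  by have := lt_trans q_Gb (le_lt_trans (GF _ _ ab) Fa_q); rewrite ltxx.
move=> a b; rewrite !inE /= => Ga Gb /(pcan_inj (@pickleK rat)) qab.
case: (ltgtP a b) => // ab; first by have /eqP := disjoint_gaps _ _ Ga Gb ab.
by have /eqP := disjoint_gaps _ _ Gb Ga ab; rewrite qab.
Qed.

Lemma shift_below_ae_eq {R : realType} {F G : R -> R} :
  shift_below G F -> shift_below F G ->
  (@lebesgue_measure R).-negligible [set t | F t != G t].
Proof.
have gap_null (F' G' : R -> R) : shift_below G' F' ->
    (@lebesgue_measure R).-negligible [set t | F' t < G' t].
  move=> GF; exists [set t | F' t < G' t]; split => //.
  - apply: countable_measurable; first by move=> ?; exact: measurable_set1.
    exact: countable_shift_gap.
  - exact/countable_lebesgue_measure0/countable_shift_gap.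
move=> GF FG.
apply: (negligibleS _ (negligibleU (gap_null _ _ GF) (gap_null _ _ FG))).
by move=> t /=; rewrite neq_lt => /orP[]; [left|right].
Qed.

Lemma integral_shift_below {R : realType} {F G : R -> R} {D : set R} (c : R) :
  measurable D -> {homo F : a b / a <= b >-> b <= a} ->
  {homo G : a b / a <= b >-> b <= a} -> shift_below G F -> shift_below F G ->
  (\int[lebesgue_measure]_(t in D) (F t - c)%:E =
   \int[lebesgue_measure]_(t in D) (G t - c)%:E)%E.
Proof.
move=> mD Fdecr Gdecr GF FG.
have shift_measurable (H : R -> R) : {homo H : a b / a <= b >-> b <= a} ->
    measurable_fun D (fun t => (H t - c)%:E).
  move=> Hdecr; apply/measurable_EFinP; apply: nonincreasing_measurable => //.
  by move=> a b ab; rewrite lerB // Hdecr.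
apply: ae_eq_integral => //; [exact: shift_measurable..|].
apply: negligibleS (shift_below_ae_eq GF FG) => t /= Ft_neq.
by apply/negP => /eqP FGt; apply: Ft_neq => _; rewrite FGt.
Qed.

Definition level {R : realType} (nu : set nat -> R) (x : nat -> R) (t : R) : R :=
  nu [set n | t <= x n].

Lemma level_nonincreasing {R : realType} {nu : set nat -> R} (x : nat -> R) :
  (forall A B, A `<=` B -> nu A <= nu B) ->
  {homo level nu x : a b / a <= b >-> b <= a}.
Proof. by move=> nu_mono a b ab; apply: nu_mono => n /= /(le_trans ab). Qed.

(* Removing from {t <= x} the set
   {t - s <= |x - y|} in I does not change nu, and what remains lies in
   {s <= y}. *)
Lemma level_shift_below {R : realType} {I : set (set nat)}
    {nu : set nat -> R} {x y : nat -> R} :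
  (forall A B, B `<=` A -> I A -> I B) ->
  (forall A B, A `<=` B -> nu A <= nu B) -> ideal_invariant I nu ->
  c0_ideal I (x \- y) -> shift_below (level nu x) (level nu y).
Proof.
move=> I_sub nu_mono nu_inv xy_c0 s t st.
set E := [set n | t - s <= `|x n - y n|].
have IE : I E by apply: xy_c0; rewrite subr_gt0.
have -> : level nu x t = nu ([set n | t <= x n] `\` E).
  apply: nu_inv; apply: I_sub IE => n.
  move=> [[xn nE]|[[xn _] /(_ xn)//]].
  by have [//|En] := pselect (E n); case: nE.
apply: nu_mono => n [/= xn /negP]; rewrite -ltNge => dist_small.
by have := ler_norm (x n - y n); lra.
Qed.

Lemma c0_ideal_sym {R : realType} {I : set (set nat)} {x y : nat -> R} :
  c0_ideal I (x \- y) -> c0_ideal I (y \- x).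
Proof.
move=> xy_c0 e e_gt0; rewrite (_ : [set n | _] = [set n | e <= `|x n - y n|]).
  exact: xy_c0.
by apply/seteqP; split => n /=; rewrite distrC.
Qed.

Theorem mainTheorem14 (R : realType) (I : set (set nat)) (nu : set nat -> R) :
  is_ideal I -> normalized_capacity nu -> ideal_invariant I nu ->
  forall x y : nat -> R, bounded_seq x -> bounded_seq y ->
  (c0_ideal I (x \- y) /\ bounded_seq (x \- y)) ->
  choquet nu x = choquet nu y.
Proof.
move=> [I_sub _] [nu_mono _] nu_inv x y _ _ [xy_c0 _].
have xy := level_shift_below I_sub nu_mono nu_inv xy_c0.
have yx := level_shift_below I_sub nu_mono nu_inv (c0_ideal_sym xy_c0).
have same_integral D c : measurable D ->
    (\int[lebesgue_measure]_(t in D) (nu [set n | t <= x n] - c)%:E =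
     \int[lebesgue_measure]_(t in D) (nu [set n | t <= y n] - c)%:E)%E.
  move=> mD; exact: (integral_shift_below c mD
    (level_nonincreasing x nu_mono) (level_nonincreasing y nu_mono) yx xy).
rewrite /choquet /choquet_ext; congr (fine (_ + _))%E.
- under eq_integral do rewrite -[nu _]subr0.
  under [RHS]eq_integral do rewrite -[nu _]subr0.
  exact: same_integral.
- exact: same_integral.
Qed.
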